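(* Let $(X,d,\alpha)$ be a computable metric space. Suppose $A$, $B$ and $S$ are subsets of $X$ such that $A\subseteq S$ and $B\subseteq S$ and such that $A$ and $B$ are computable up to $S$. Then $A\cup B$ is computable up to $S$.
   Context: A computable metric space is a triple $(X,d,\alpha)$ where $(X,d)$ is a metric space and $\alpha=(\alpha_i)_{i\in\mathbb N}$ is a sequence with dense range in $(X,d)$ such that $(i,j)\mapsto d(\alpha_i,\alpha_j)$ is a computable function $\mathbb N^2\to\mathbb R$. Fix computable $\sigma:\mathbb N^2\to\mathbb N$, $\eta:\mathbb N\to\mathbb N$ such that $\{(\sigma(j,0),\dots,\sigma(j,\eta(j))):j\in\mathbb N\}$ is the set of all nonempty finite sequences in $\mathbb N$; let $[j]=\{\sigma(j,i):0\le i\le\eta(j)\}$ and $\Lambda_j=\{\alpha_i:i\in[j]\}$. For $A,B\subseteq X$ and $\varepsilon>0$ write $A\prec_\varepsilon B$ if for each $a\in A$ there is $b\in B$ with $d(a,b)<\varepsilon$. For $A\subseteq S\subseteq X$, $A$ is computable up to $S$ if there is a computable $f:\mathbb N\to\mathbb N$ with $A\prec_{2^{-k}}\Lambda_{f(k)}$ and $\Lambda_{f(k)}\prec_{2^{-k}}S$ for all $k\in\mathbb N$. *)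

From Stdlib Require Import Reals List.
Import ListNotations.
Open Scope R_scope.

(** Projection [Proj i] returns the i-th argument (0 if absent).
    [PrimRec f g] recurses on the FIRST argument:
      PR(0, xs) = f xs,  PR(n+1, xs) = g (n :: PR(n,xs) :: xs).
    [Min f] xs = least y with f (y :: xs) = 0, all f (z :: xs) (z<y) defined
    and nonzero. *)
Inductive rterm : Type :=
| Zer : rterm
| Suc : rterm
| Proj : nat -> rterm
| Comp : rterm -> list rterm -> rterm
| PrimRec : rterm -> rterm -> rterm
| Min : rterm -> rterm.

Inductive reval : rterm -> list nat -> nat -> Prop :=
| ev_zer xs : reval Zer xs 0
| ev_suc x xs : reval Suc (x :: xs) (S x)
| ev_proj i xs : reval (Proj i) xs (nth i xs 0%nat)
| ev_comp f gs xs ys y :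
    revals gs xs ys -> reval f ys y -> reval (Comp f gs) xs y
| ev_pr0 f g xs y : reval f xs y -> reval (PrimRec f g) (0%nat :: xs) y
| ev_prS f g n xs r y :
    reval (PrimRec f g) (n :: xs) r -> reval g (n :: r :: xs) y ->
    reval (PrimRec f g) (S n :: xs) y
| ev_min f xs y :
    reval f (y :: xs) 0%nat ->
    (forall z, (z < y)%nat -> exists v, reval f (z :: xs) v /\ v <> 0%nat) ->
    reval (Min f) xs y
with revals : list rterm -> list nat -> list nat -> Prop :=
| evs_nil xs : revals [] xs []
| evs_cons g gs xs y ys :
    reval g xs y -> revals gs xs ys -> revals (g :: gs) xs (y :: ys).

Definition computable1 (f : nat -> nat) : Prop :=
  exists t, forall n, reval t [n] (f n).
Definition computable2 (f : nat -> nat -> nat) : Prop :=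
  exists t, forall m n, reval t [m; n] (f m n).
Definition computable3 (f : nat -> nat -> nat -> nat) : Prop :=
  exists t, forall m n k, reval t [m; n; k] (f m n k).

Definition computable_R2 (f : nat -> nat -> R) : Prop :=
  exists a b c : nat -> nat -> nat -> nat,
    computable3 a /\ computable3 b /\ computable3 c /\
    forall i j k,
      Rabs (f i j - (INR (a i j k) - INR (b i j k)) / INR (S (c i j k)))
        < / 2 ^ k.

Definition is_metric {X : Type} (d : X -> X -> R) : Prop :=
  (forall x y, 0 <= d x y) /\
  (forall x y, d x y = 0 <-> x = y) /\
  (forall x y, d x y = d y x) /\
  (forall x y z, d x z <= d x y + d y z).

Definition dense_seq {X : Type} (d : X -> X -> R) (alpha : nat -> X) : Prop :=
  forall x eps, 0 < eps -> exists i, d x (alpha i) < eps.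

Definition computable_metric_space {X : Type} (d : X -> X -> R)
  (alpha : nat -> X) : Prop :=
  is_metric d /\ dense_seq d alpha /\
  computable_R2 (fun i j => d (alpha i) (alpha j)).

Definition seq_of (sigma : nat -> nat -> nat) (eta : nat -> nat) (j : nat)
  : list nat := map (sigma j) (seq 0 (S (eta j))).

Definition finseq_enum (sigma : nat -> nat -> nat) (eta : nat -> nat) : Prop :=
  computable2 sigma /\ computable1 eta /\
  (forall s : list nat, s <> [] <-> exists j, s = seq_of sigma eta j).

Definition Lambda {X : Type} (alpha : nat -> X) (sigma : nat -> nat -> nat)
  (eta : nat -> nat) (j : nat) : X -> Prop :=
  fun x => exists i, (i <= eta j)%nat /\ x = alpha (sigma j i).

Definition prec_eps {X : Type} (d : X -> X -> R) (A B : X -> Prop) (eps : R)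
  : Prop := forall a, A a -> exists b, B b /\ d a b < eps.

Definition subset {X : Type} (A B : X -> Prop) : Prop := forall x, A x -> B x.

Definition computable_up_to {X : Type} (d : X -> X -> R) (alpha : nat -> X)
  (sigma : nat -> nat -> nat) (eta : nat -> nat) (A S : X -> Prop) : Prop :=
  exists f : nat -> nat, computable1 f /\
    forall k : nat,
      prec_eps d A (Lambda alpha sigma eta (f k)) (/ 2 ^ k) /\
      prec_eps d (Lambda alpha sigma eta (f k)) S (/ 2 ^ k).

(* The index functions f and g of the approximations of A and B are combined into one for
   A ∪ B by concatenation: Λ_{h(k)} = Λ_{f(k)} ∪ Λ_{g(k)} as soon as the finite sequence [h(k)]
   is [f(k)] followed by [g(k)].  Such an h is computable: the mismatch between [j] and the
   concatenation is a computable function of (j, k) that vanishes for some j, because every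
   nonempty finite sequence is enumerated, so h can be obtained by unbounded minimization. *)

From Stdlib Require Import Reals List Lia Arith ConstructiveEpsilon.
Import ListNotations.

Open Scope nat_scope.

Lemma reval_proj i xs v : nth i xs 0 = v -> reval (Proj i) xs v.
Proof. intros <-; constructor. Qed.

Lemma reval_comp0 f xs y : reval f [] y -> reval (Comp f []) xs y.
Proof. intros; eapply ev_comp; [constructor | eauto]. Qed.

Lemma reval_comp1 f g1 xs a y :
  reval g1 xs a -> reval f [a] y -> reval (Comp f [g1]) xs y.
Proof. intros; eapply ev_comp; [repeat (constructor; eauto) | eauto]. Qed.

Lemma reval_comp2 f g1 g2 xs a b y :
  reval g1 xs a -> reval g2 xs b -> reval f [a; b] y -> reval (Comp f [g1; g2]) xs y.
Proof. intros; eapply ev_comp; [repeat (constructor; eauto) | eauto]. Qed.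

Lemma reval_comp3 f g1 g2 g3 xs a b c y :
  reval g1 xs a -> reval g2 xs b -> reval g3 xs c -> reval f [a; b; c] y ->
  reval (Comp f [g1; g2; g3]) xs y.
Proof. intros; eapply ev_comp; [repeat (constructor; eauto) | eauto]. Qed.

Create HintDb reval.
#[export] Hint Resolve ev_suc ev_zer : reval.

(* Specifications (hints and hypotheses) are tried before unfolding a composition, since named
   programs are themselves compositions; arguments are evaluated before the outer function. *)
Ltac reval_auto :=
  repeat first
    [ solve [eauto with reval]
    | eapply reval_comp0 | eapply reval_comp1 | eapply reval_comp2 | eapply reval_comp3
    | apply reval_proj; reflexivity ].

Definition zero_term := Comp Zer [].

Lemma zero_term_spec xs : reval zero_term xs 0.
Proof. reval_auto. Qed.

Definition add_term := PrimRec (Proj 0) (Comp Suc [Proj 1]).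

Lemma add_term_spec m n : reval add_term [m; n] (m + n).
Proof.
  induction m as [|m IH]; simpl.
  - apply ev_pr0; reval_auto.
  - eapply ev_prS; [exact IH | reval_auto].
Qed.

Definition pred_term := PrimRec zero_term (Proj 0).

Lemma pred_term_spec n : reval pred_term [n] (Nat.pred n).
Proof.
  induction n as [|n IH]; simpl.
  - apply ev_pr0, zero_term_spec.
  - eapply ev_prS; [exact IH | reval_auto].
Qed.

(* Note the order of the arguments: [m; n] is sent to n - m. *)
Definition monus_term := PrimRec (Proj 0) (Comp pred_term [Proj 1]).

Lemma monus_term_spec m n : reval monus_term [m; n] (n - m).
Proof.
  induction m as [|m IH].
  - apply ev_pr0; apply reval_proj; simpl; lia.
  - eapply ev_prS; [exact IH |].
    replace (n - S m) with (Nat.pred (n - m)) by lia.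
    eapply reval_comp1; [apply reval_proj; reflexivity | apply pred_term_spec].
Qed.

Definition nat_dist (m n : nat) : nat := (n - m) + (m - n).

Lemma nat_dist_eq_0 m n : nat_dist m n = 0 <-> m = n.
Proof. unfold nat_dist; lia. Qed.

Definition dist_term :=
  Comp add_term [Comp monus_term [Proj 0; Proj 1]; Comp monus_term [Proj 1; Proj 0]].

Lemma dist_term_spec m n : reval dist_term [m; n] (nat_dist m n).
Proof.
  eapply reval_comp2; [| | apply add_term_spec];
    (eapply reval_comp2; [apply reval_proj; reflexivity .. | apply monus_term_spec]).
Qed.

#[export] Hint Resolve add_term_spec dist_term_spec : reval.

Fixpoint bsum (F : nat -> nat) (n : nat) : nat :=
  match n with 0 => 0 | S n => bsum F n + F n end.

Lemma bsum_eq_0 F n : bsum F n = 0 <-> forall i, i < n -> F i = 0.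
Proof.
  induction n as [|n IH]; simpl; [split; intros; lia |].
  split.
  - intros H i Hi.
    destruct (Nat.eq_dec i n) as [-> | Hne]; [lia | apply IH; lia].
  - intros H. rewrite (proj2 IH), H; auto.
Qed.

Definition sum_term (t : rterm) :=
  PrimRec zero_term (Comp add_term [Proj 1; Comp t [Proj 0; Proj 2; Proj 3]]).

Lemma sum_term_spec t (F : nat -> nat -> nat -> nat) :
  (forall i j k, reval t [i; j; k] (F i j k)) ->
  forall n j k, reval (sum_term t) [n; j; k] (bsum (fun i => F i j k) n).
Proof.
  intros HF n j k; induction n as [|n IH]; simpl.
  - apply ev_pr0, zero_term_spec.
  - eapply ev_prS; [exact IH |].
    eapply reval_comp2; [reval_auto | | apply add_term_spec].
    eapply reval_comp3; [reval_auto .. | apply HF].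
Qed.

Lemma computable_minimization (D : nat -> nat -> nat) :
  computable2 D -> (forall k, exists j, D j k = 0) ->
  exists h, computable1 h /\ forall k, D (h k) k = 0.
Proof.
  intros [t Ht] Hex.
  pose (least k := epsilon_smallest (fun j => D j k = 0) (fun j => Nat.eq_dec _ _) (Hex k)).
  exists (fun k => proj1_sig (least k)).
  split; [| intros k; apply (proj2_sig (least k))].
  exists (Min t); intros k.
  destruct (least k) as [j [Hj Hmin]]; simpl.
  constructor.
  - rewrite <- Hj; apply Ht.
  - intros z Hz; exists (D z k); split; [apply Ht |].
    intros Hz0; specialize (Hmin z Hz0); lia.
Qed.

Section FiniteSequences.

Variables (sigma : nat -> nat -> nat) (eta : nat -> nat).

Lemma length_seq_of j : length (seq_of sigma eta j) = S (eta j).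
Proof. unfold seq_of; now rewrite length_map, length_seq. Qed.

Lemma nth_seq_of j i d : i <= eta j -> nth i (seq_of sigma eta j) d = sigma j i.
Proof.
  intros Hi; unfold seq_of.
  rewrite nth_indep with (d' := sigma j 0) by (rewrite length_map, length_seq; lia).
  rewrite map_nth, seq_nth by lia; reflexivity.
Qed.

Lemma seq_of_eq_app j j1 j2 :
  seq_of sigma eta j = seq_of sigma eta j1 ++ seq_of sigma eta j2 <->
  eta j = S (eta j1 + eta j2) /\
  (forall i, i <= eta j1 -> sigma j i = sigma j1 i) /\
  (forall i, i <= eta j2 -> sigma j (S (eta j1 + i)) = sigma j2 i).
Proof.
  split.
  - intros Hj.
    assert (Hlen := f_equal (@length nat) Hj).
    rewrite length_app, !length_seq_of in Hlen.
    split; [lia | split; intros i Hi].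
    + rewrite <- (nth_seq_of j i 0), <- (nth_seq_of j1 i 0), Hj by lia.
      apply app_nth1; rewrite length_seq_of; lia.
    + rewrite <- (nth_seq_of j _ 0), <- (nth_seq_of j2 i 0), Hj by lia.
      rewrite app_nth2; rewrite length_seq_of; [f_equal; lia | lia].
  - intros (Hlen & Hhead & Htail).
    apply nth_ext with (d := 0) (d' := 0);
      [rewrite length_app, !length_seq_of; lia |].
    rewrite length_seq_of; intros i Hi.
    rewrite nth_seq_of by lia.
    destruct (le_lt_dec i (eta j1)) as [Hle | Hlt].
    + rewrite app_nth1, nth_seq_of by (rewrite ?length_seq_of; lia); auto.
    + rewrite app_nth2, length_seq_of, nth_seq_of by (rewrite ?length_seq_of; lia).
      rewrite <- Htail by lia; f_equal; lia.
Qed.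

Lemma Lambda_seq_of {X : Type} (alpha : nat -> X) j x :
  Lambda alpha sigma eta j x <-> exists n, In n (seq_of sigma eta j) /\ x = alpha n.
Proof.
  unfold Lambda, seq_of; split.
  - intros (i & Hi & ->); exists (sigma j i); split; auto.
    apply in_map, in_seq; lia.
  - intros (n & Hn & ->).
    apply in_map_iff in Hn as (i & <- & Hi); apply in_seq in Hi.
    exists i; split; [lia | auto].
Qed.

Lemma Lambda_app {X : Type} (alpha : nat -> X) j j1 j2 :
  seq_of sigma eta j = seq_of sigma eta j1 ++ seq_of sigma eta j2 ->
  forall x, Lambda alpha sigma eta j x <->
            Lambda alpha sigma eta j1 x \/ Lambda alpha sigma eta j2 x.
Proof.
  intros Hj x; rewrite !Lambda_seq_of, Hj; split.
  - intros (n & Hn & ->); apply in_app_iff in Hn as [Hn | Hn]; eauto.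
  - intros [(n & Hn & ->) | (n & Hn & ->)]; exists n; rewrite in_app_iff; auto.
Qed.

Variables f g : nat -> nat.

Definition concat_mismatch (j k : nat) : nat :=
  nat_dist (eta j) (S (eta (f k) + eta (g k))) +
  bsum (fun i => nat_dist (sigma j i) (sigma (f k) i)) (S (eta (f k))) +
  bsum (fun i => nat_dist (sigma j (S (eta (f k) + i))) (sigma (g k) i)) (S (eta (g k))).

Lemma concat_mismatch_eq_0 j k :
  concat_mismatch j k = 0 <->
  seq_of sigma eta j = seq_of sigma eta (f k) ++ seq_of sigma eta (g k).
Proof.
  rewrite seq_of_eq_app; unfold concat_mismatch.
  rewrite !Nat.eq_add_0, nat_dist_eq_0, !bsum_eq_0.
  setoid_rewrite nat_dist_eq_0.
  split.
  - intros ((Hlen & Hhead) & Htail); repeat split; auto;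
      intros i Hi; (apply Hhead || apply Htail); lia.
  - intros (Hlen & Hhead & Htail); repeat split; auto;
      intros i Hi; (apply Hhead || apply Htail); lia.
Qed.

Lemma concat_mismatch_computable :
  computable2 sigma -> computable1 eta -> computable1 f -> computable1 g ->
  computable2 concat_mismatch.
Proof.
  intros [ts Hs] [te He] [tf Hf] [tg Hg].
  pose (len_f i := Comp te [Comp tf [Proj i]]).
  pose (len_g i := Comp te [Comp tg [Proj i]]).
  pose (head_term := Comp dist_term [Comp ts [Proj 1; Proj 0]; Comp ts [Comp tf [Proj 2]; Proj 0]]).
  pose (tail_term := Comp dist_term
          [Comp ts [Proj 1; Comp Suc [Comp add_term [len_f 2; Proj 0]]];
           Comp ts [Comp tg [Proj 2]; Proj 0]]).
  exists (Comp add_term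
            [Comp add_term
               [Comp dist_term [Comp te [Proj 0]; Comp Suc [Comp add_term [len_f 1; len_g 1]]];
                Comp (sum_term head_term) [Comp Suc [len_f 1]; Proj 0; Proj 1]];
             Comp (sum_term tail_term) [Comp Suc [len_g 1]; Proj 0; Proj 1]]).
  intros j k; unfold concat_mismatch.
  reval_auto.
  - apply (sum_term_spec _ (fun i j k => nat_dist (sigma j i) (sigma (f k) i))).
    intros; reval_auto.
  - apply (sum_term_spec _ (fun i j k => nat_dist (sigma j (S (eta (f k) + i))) (sigma (g k) i))).
    intros; reval_auto.
Qed.

Lemma computable_concat_index :
  finseq_enum sigma eta -> computable1 f -> computable1 g ->
  exists h, computable1 h /\
    forall k, seq_of sigma eta (h k) = seq_of sigma eta (f k) ++ seq_of sigma eta (g k).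
Proof.
  intros (Hsigma & Heta & Henum) Hf Hg.
  destruct (computable_minimization concat_mismatch) as (h & Hh & Hzero).
  - now apply concat_mismatch_computable.
  - intros k.
    destruct (proj1 (Henum (seq_of sigma eta (f k) ++ seq_of sigma eta (g k)))) as [j Hj];
      [unfold seq_of; simpl; discriminate |].
    exists j; apply concat_mismatch_eq_0; auto.
  - exists h; split; [exact Hh |].
    intros k; apply concat_mismatch_eq_0, Hzero.
Qed.

End FiniteSequences.

Close Scope nat_scope.

Section Approximation.

Variables (X : Type) (d : X -> X -> R) (eps : R).

Lemma prec_eps_subset_l (A A' B : X -> Prop) :
  subset A' A -> prec_eps d A B eps -> prec_eps d A' B eps.
Proof. intros HA H a Ha; apply H, HA, Ha. Qed.

Lemma prec_eps_subset_r (A B B' : X -> Prop) :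
  subset B B' -> prec_eps d A B eps -> prec_eps d A B' eps.
Proof. intros HB H a Ha; destruct (H a Ha) as (b & Hb & Hd); eauto. Qed.

Lemma prec_eps_union (A1 A2 B1 B2 : X -> Prop) :
  prec_eps d A1 B1 eps -> prec_eps d A2 B2 eps ->
  prec_eps d (fun x => A1 x \/ A2 x) (fun x => B1 x \/ B2 x) eps.
Proof.
  intros H1 H2 a [Ha | Ha];
    [destruct (H1 a Ha) as (b & Hb & Hd) | destruct (H2 a Ha) as (b & Hb & Hd)]; eauto.
Qed.

Lemma prec_eps_union_l (A1 A2 S : X -> Prop) :
  prec_eps d A1 S eps -> prec_eps d A2 S eps ->
  prec_eps d (fun x => A1 x \/ A2 x) S eps.
Proof. intros H1 H2 a [Ha | Ha]; auto. Qed.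

End Approximation.

Theorem proposition4p1 (X : Type) (d : X -> X -> R) (alpha : nat -> X)
  (sigma : nat -> nat -> nat) (eta : nat -> nat)
  (A B S : X -> Prop) :
  computable_metric_space d alpha ->
  finseq_enum sigma eta ->
  subset A S -> subset B S ->
  computable_up_to d alpha sigma eta A S ->
  computable_up_to d alpha sigma eta B S ->
  computable_up_to d alpha sigma eta (fun x => A x \/ B x) S.
Proof.
  intros _ Henum _ _ (f & Hf & HA) (g & Hg & HB).
  destruct (computable_concat_index sigma eta f g Henum Hf Hg) as (h & Hh & Hcat).
  exists h; split; [exact Hh |]; intros k.
  destruct (HA k) as [HA_in HA_S], (HB k) as [HB_in HB_S].
  pose proof (Lambda_app sigma eta alpha _ _ _ (Hcat k)) as Hunion.
  split.
  - apply prec_eps_subset_r with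
      (fun x => Lambda alpha sigma eta (f k) x \/ Lambda alpha sigma eta (g k) x).
    + intros x; apply Hunion.
    + now apply prec_eps_union.
  - apply prec_eps_subset_l with
      (fun x => Lambda alpha sigma eta (f k) x \/ Lambda alpha sigma eta (g k) x).
    + intros x; apply Hunion.
    + now apply prec_eps_union_l.
Qed.
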